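(* Let $P\subseteq M_{\mathbb R}$ be a $d$-dimensional lattice simplex ($M$ of rank $d$) with vertices $v_0,\dots,v_d$, let $\tilde v_i:=(v_i,1)\in M\oplus\mathbb Z$, and let $\Pi:=\{\sum_{i=0}^d\lambda_i\tilde v_i:0\le\lambda_i<1\}$ be the half-open parallelepiped they span, with interior $\mathrm{int}(\Pi)=\{\sum\lambda_i\tilde v_i:0<\lambda_i<1\}$. Then \[\widetilde S(P,t)=\sum_{x\in\mathrm{int}(\Pi)\cap(M\oplus\mathbb Z)}t^{x_{d+1}},\] where $x_{d+1}$ is the last coordinate of $x$. In particular $\deg\widetilde S(P,t)\le\deg h^*_P(t)$.
   Context: For a lattice polytope $Q$ of dimension $k$, $h^*_Q(t)=(1-t)^{k+1}\sum_{j\ge0}\#(jQ\cap\text{lattice})\,t^j$, with $h^*_\emptyset=1$, $\dim\emptyset=-1$. For an Eulerian poset $\mathcal P$ of rank $d$ with minimum $\hat0$, maximum $\hat1$: if $d=0$, $g_{\mathcal P}=h_{\mathcal P}=1$; if $d>0$, $h_{\mathcal P}(t)=\sum_{\hat0<x\le\hat1}(t-1)^{\mathrm{rk}(x)-1}g_{[x,\hat1]}(t)$ and $g_{\mathcal P}(t)=\sum_{0\le i<d/2}(h_i-h_{i-1})t^i$ where $h_{\mathcal P}=\sum h_it^i$, $h_{-1}=0$. For faces $F\le P$ (including $\emptyset$), $[F,P]$ is the poset of faces between them. $\widetilde S(P,t)=\sum_{\emptyset\le F\le P}(-1)^{\dim P-\dim F}h^*_F(t)\,g_{[F,P]}(t)$.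 *)

From HB Require Import structures.
From mathcomp Require Import all_boot all_order all_algebra.
From mathcomp Require Import finmap.
From mathcomp Require Import boolp classical_sets cardinality.

Set Implicit Arguments.
Unset Strict Implicit.
Unset Printing Implicit Defensive.

Import Order.TTheory GRing.Theory Num.Theory.
Local Open Scope ring_scope.

(* The lattice M = Z^d is 'rV[int]_d, M_R is modelled by 'rV[rat]_d.  Faces of the simplex are indexed by the
   subsets S of the vertex set 'I_d.+1 (S = set0 is the empty face), the
   face being conv{v i | i in S}, of dimension #|S| - 1. *)

Section Simplex.
Variable d : nat.

Definition ratv (x : 'rV[int]_d) : 'rV[rat]_d := map_mx (fun z : int => z%:~R) x.

(* affine independence of v_0, ..., v_d (so that P is d-dimensional) *)
Definition affinely_independent (v : 'I_d.+1 -> 'rV[int]_d) : Prop :=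
  forall mu : 'I_d.+1 -> rat,
    \sum_i mu i = 0 -> \sum_i mu i *: ratv (v i) = 0 -> forall i, mu i = 0.

Definition in_dilate (v : 'I_d.+1 -> 'rV[int]_d) (S : {set 'I_d.+1}) (j : nat)
    (x : 'rV[int]_d) : Prop :=
  exists lam : 'I_d.+1 -> rat,
    [/\ forall i, 0 <= lam i,
        forall i, i \notin S -> lam i = 0,
        \sum_i lam i = j%:R &
        ratv x = \sum_i lam i *: ratv (v i)].

(* #(jF \cap M) for the face F = conv{v i | i in S} *)
Definition ehr (v : 'I_d.+1 -> 'rV[int]_d) (S : {set 'I_d.+1}) (j : nat) : nat :=
  #|` fset_set [set x | in_dilate v S j x] |%fset.

(* coefficient of t^n in h^*_F(t) = (1-t)^{dim F + 1} \sum_j #(jF \cap M) t^j,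
   with dim F + 1 = #|S|, and h^*_\emptyset = 1. *)
Definition hstar (v : 'I_d.+1 -> 'rV[int]_d) (S : {set 'I_d.+1}) (n : nat) : int :=
  if #|S| == 0%N then (n == 0%N)%:R
  else \sum_(i < n.+1 | (i <= #|S|)%N)
         (-1) ^+ i * ('C(#|S|, i))%:R * (ehr v S (n - i))%:R.

(* g-polynomial of the face-poset interval [F, G] (F, G given by vertex sets
   A \subset B); its rank is #|B| - #|A| and rk(X) = #|X| - #|A|.
   The recursion is the one of the paper: for rank r > 0,
   h_{[A,B]} = \sum_{A < X <= B} (t-1)^{rk X - 1} g_{[X,B]},
   g_{[A,B]} = \sum_{0 <= i < r/2} (h_i - h_{i-1}) t^i;  for r = 0, g = 1.
   [gpoly_fuel k] computes it for any fuel k >= rank. *)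
Fixpoint gpoly_fuel (k : nat) (A B : {set 'I_d.+1}) : {poly int} :=
  match k with
  | 0%N => 1
  | k'.+1 =>
    let r := (#|B| - #|A|)%N in
    if r == 0%N then 1 else
    let h := \sum_(X : {set 'I_d.+1} | (A \proper X) && (X \subset B))
               ('X - 1) ^+ (#|X| - #|A| - 1) * gpoly_fuel k' X B in
    \poly_(i < r) (if (i.*2 < r)%N
                   then h`_i - (if i is i'.+1 then h`_i' else 0)
                   else 0)
  end.

Definition gpoly (A B : {set 'I_d.+1}) : {poly int} :=
  gpoly_fuel (#|B| - #|A|) A B.

(* coefficient of t^n in
   S~(P,t) = \sum_{\emptyset <= F <= P} (-1)^{dim P - dim F} h^*_F(t) g_{[F,P]}(t),
   dim P - dim F = d - (#|S| - 1) = d + 1 - #|S|. *)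
Definition Stilde (v : 'I_d.+1 -> 'rV[int]_d) (n : nat) : int :=
  \sum_(S : {set 'I_d.+1})
     (-1) ^+ (d.+1 - #|S|) *
     \sum_(i < n.+1) hstar v S i * (gpoly S [set: 'I_d.+1]%SET)`_(n - i).

(* (y, h) \in M (+) Z lies in the interior of the half-open parallelepiped
   spanned by the lifts (v i, 1). *)
Definition in_int_Pi (v : 'I_d.+1 -> 'rV[int]_d) (y : 'rV[int]_d) (h : int) : Prop :=
  exists lam : 'I_d.+1 -> rat,
    [/\ forall i, 0 < lam i < 1,
        ratv y = \sum_i lam i *: ratv (v i) &
        h%:~R = \sum_i lam i].

Definition count_int_Pi (v : 'I_d.+1 -> 'rV[int]_d) (m : int) : nat :=
  #|` fset_set [set y | in_int_Pi v y m] |%fset.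

Definition StildeZ (v : 'I_d.+1 -> 'rV[int]_d) (m : int) : int :=
  match m with Posz n => Stilde v n | Negz _ => 0 end.

End Simplex.

(* Every interval of the face lattice of a simplex is Boolean, so all the
   g-polynomials in S~(P,t) equal 1 and S~(P,t) = sum_F (-1)^(codim F) h*_F(t).
   Expanding (1-t)^(dim F + 1) by inclusion-exclusion, and noting that
   subtracting v_i from a point of nP whose i-th barycentric coordinate is >= 1
   lands in (n-1)P, the coefficient of t^n in h*_F counts the lattice points of
   nP whose barycentric coordinates are supported on F and all < 1.  The
   alternating sum over the faces F then keeps exactly the points with all
   coordinates in (0,1), i.e. the lattice points of int(Pi) at height n; they
   are among the points counted by the coefficient of t^n in h*_P, which gives
   the degree bound. *)

From HB Require Import structures.
From mathcomp Require Import all_boot all_order all_algebra.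
From mathcomp Require Import finmap.
From mathcomp Require Import boolp classical_sets cardinality.
From mathcomp Require Import zify.
From mathcomp Require Import fintype finset.

Set Implicit Arguments.
Unset Strict Implicit.
Unset Printing Implicit Defensive.

Import Order.TTheory GRing.Theory Num.Theory.
Local Open Scope ring_scope.

Section SubsetSums.
Variables (R : comNzRingType) (T : finType).
Implicit Types A B U : {set T}.

Lemma sum_interval_exp A B (x : R) : A \subset B ->
  \sum_(J : {set T} | (A \subset J) && (J \subset B)) x ^+ #|J :\: A|
    = (x + 1) ^+ #|B :\: A|.
Proof.
move=> AB.
pose F i : R := if i \in A then 1 else if i \in B then x else 0.
pose G i : R := if i \in A then 0 else 1.
have := @bigA_distr R 0 1 *%R +%R T F G; rewrite /=.
have -> : \prod_i (F i + G i) = (x + 1) ^+ #|B :\: A|.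
  rewrite (bigID (mem (B :\: A))) /= (eq_bigr (fun _ => x + 1)); last first.
    by move=> i; rewrite inE /F /G => /andP[/negbTE -> ->].
  rewrite prodr_const big1 ?mulr1 => [|i]; last first.
    by rewrite inE negb_and negbK /F /G; case: (i \in A) => [|/negbTE ->];
       rewrite ?addr0 ?add0r.
  by congr (_ ^+ _); apply: eq_card => i; rewrite !inE.
move=> ->; rewrite [RHS](bigID (fun J : {set T} => (A \subset J) && (J \subset B))) /=.
rewrite [X in _ = _ + X]big1 ?addr0 => [|J].
  apply: eq_bigr => J /andP[AJ JB].
  rewrite (eq_bigr (fun i => if i \in J :\: A then x else 1)) => [|i _].
    by rewrite -big_mkcond /= prodr_const.
  rewrite inE /F /G; case: (boolP (i \in A)) => iA /=; first by rewrite (subsetP AJ).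
  by case: (boolP (i \in J)) => // iJ; rewrite (subsetP JB).
rewrite negb_and => /orP[/subsetPn [i iA iJ]|/subsetPn [i iJ iB]].
  by rewrite (bigD1 i) //= (negbTE iJ) /G iA mul0r.
rewrite (bigD1 i) //= iJ /F (negbTE iB); case: (boolP (i \in A)); last by rewrite mul0r.
by move=> /(subsetP AB); rewrite (negbTE iB).
Qed.

Lemma sum_subset_sign U :
  \sum_(J : {set T} | J \subset U) (-1) ^+ #|J| = (U == set0)%:R :> R.
Proof.
have := sum_interval_exp (-1) (sub0set U); rewrite addNr expr0n setD0 cards_eq0.
by move=> <-; apply: eq_big => [J|J _]; rewrite ?sub0set ?setD0.
Qed.

Lemma sum_supset_sign U :
  \sum_(S : {set T}) (-1) ^+ (#|T| - #|S|) * (U \subset S)%:R = (U == setT)%:R :> R.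
Proof.
rewrite (reindex_inj (@setC_inj _)) /=.
have -> : (U == setT) = (~: U == set0) by rewrite -setCT (inj_eq (@setC_inj T)).
rewrite -sum_subset_sign [RHS]big_mkcond /=; apply: eq_bigr => S _.
have -> : (#|T| - #|~: S|)%N = #|S| by rewrite -(cardsC S) addnK.
by rewrite subsetC; case: (S \subset ~: U); rewrite ?mulr1 ?mulr0.
Qed.

End SubsetSums.

Lemma sum_proper_interval_exp (R : idomainType) (T : finType) (A B : {set T}) :
  A \subset B ->
  \sum_(X : {set T} | (A \proper X) && (X \subset B)) ('X - 1) ^+ (#|X| - #|A| - 1)
    = \poly_(i < #|B| - #|A|) 1 :> {poly R}.
Proof.
move=> AB; apply: (@mulfI _ ('X - 1)); first exact: monic_neq0 (monicXsubC 1).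
have -> : \poly_(i < #|B| - #|A|) 1 = \sum_(i < #|B| - #|A|) 'X^i :> {poly R}.
  by rewrite poly_def; apply: eq_bigr => i _; rewrite scale1r.
rewrite -subrX1 -[X in X ^+ _](subrK 1 'X).
have -> : (#|B| - #|A| = #|B :\: A|)%N by rewrite cardsD (setIidPr AB).
rewrite -sum_interval_exp // [X in _ = X - _](bigD1 A) /= ?subxx //.
rewrite setDv cards0 expr0 addrC addrK.
rewrite mulr_sumr; apply: eq_big => [X|X /andP[AX _]].
  by rewrite properEneq eq_sym; case: (X != A); case: (X \subset B); case: (A \subset X).
rewrite -exprS cardsD (setIidPr (proper_sub AX)); congr (_ ^+ _).
by have := proper_card AX; lia.
Qed.

Lemma gpoly_fuel_eq1 (d k : nat) (A B : {set 'I_d.+1}) :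
  A \subset B -> gpoly_fuel k A B = 1.
Proof.
elim: k A => [//|k IHk] A AB /=.
case: eqP => // /eqP r_neq0.
set h := \sum_(X | _) _.
have hE : h = \poly_(i < #|B| - #|A|) 1.
  rewrite -sum_proper_interval_exp //; apply: eq_bigr => X /andP[_ XB].
  by rewrite IHk // mulr1.
apply/polyP => i; rewrite coef_poly coefC hE.
case: i => [|i]; first by rewrite coef_poly lt0n r_neq0.
case: ifP => // ir; case: ifP => // _.
by rewrite !coef_poly ir (ltn_trans (ltnSn i) ir) subrr.
Qed.

Lemma sum_subsets_by_card (R : nmodType) (T : finType) (S : {set T}) n (f : nat -> R) :
  \sum_(I : {set T} | (I \subset S) && (#|I| <= n)%N) f #|I|
    = \sum_(i < n.+1 | (i <= #|S|)%N) f i *+ 'C(#|S|, i).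
Proof.
rewrite (partition_big (fun I : {set T} => inord #|I| : 'I_n.+1) xpredT) //=.
rewrite [RHS]big_mkcond /=; apply: eq_bigr => j _.
rewrite (eq_bigl (fun I : {set T} => (I \subset S) && (#|I| == j))) => [|I]; last first.
  rewrite -andbA; congr (_ && _); case: (leqP #|I| n) => In /=.
    by rewrite -val_eqE /= inordK.
  by apply/esym/negbTE; apply: contraTneq In => ->; rewrite -leqNgt -ltnS.
rewrite (eq_bigr (fun _ => f j)) => [|I /andP[_ /eqP <-] //].
rewrite sumr_const.
have -> : #|[pred I : {set T} | (I \subset S) && (#|I| == j)]| = 'C(#|S|, j).
  by rewrite -cards_draws; apply: eq_card => I; rewrite !inE.
by case: leqP => // jS; rewrite bin_small.
Qed.

Lemma card_fset_set_sum (T : choiceType) (A D : set T) :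
  finite_set D -> (A `<=` D)%classic ->
  #|` fset_set A| = (\sum_(y <- fset_set D) `[< A y >])%N.
Proof.
move=> finD AD; have finA := sub_finite_set AD finD.
rewrite card_fset_sum1.
have -> : fset_set A = [fset y in fset_set D | `[< A y >]]%fset.
  apply/fsetP => y; rewrite in_fset_set // !finmap.inE in_fset_set //.
  apply/idP/andP => [/set_mem Ay|[_ /asboolP /mem_set]] //.
  by split; [apply/mem_set/AD | apply/asboolP].
rewrite -big_fset_condE big_mkcond /=.
by apply: eq_bigr => y _; case: asboolP.
Qed.

Lemma card_fset_set_eq0 (T : choiceType) (A : set T) :
  (forall x, ~ A x) -> #|` fset_set A| = 0%N.
Proof.
move=> A0; rewrite (_ : A = classical_sets.set0) ?fset_set0 //.
by apply/seteqP; split=> // x /A0.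
Qed.

Lemma ratvD d (x y : 'rV[int]_d) : ratv (x + y) = ratv x + ratv y.
Proof. exact: map_mxD. Qed.

Lemma ratvN d (x : 'rV[int]_d) : ratv (- x) = - ratv x.
Proof. exact: map_mxN. Qed.

Lemma ratv0 d : ratv (0 : 'rV[int]_d) = 0.
Proof. exact: map_mx0. Qed.

Lemma ratv_sum d (I : finType) (P : pred I) (F : I -> 'rV[int]_d) :
  ratv (\sum_(i | P i) F i) = \sum_(i | P i) ratv (F i).
Proof. exact: map_mx_sum. Qed.

Lemma ratv_inj d : injective (@ratv d).
Proof. by move=> x y /rowP E; apply/rowP => k; have := E k; rewrite !mxE => /intr_inj. Qed.

Section Simplex.
Variables (d : nat) (v : 'I_d.+1 -> 'rV[int]_d).
Implicit Types (x y : 'rV[int]_d) (S I : {set 'I_d.+1}) (n : nat).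

Definition vertex_bound : nat := (\sum_i \sum_(k < d) `|v i ord0 k|)%N.

Lemma in_dilate_bound S n x k :
  in_dilate v S n x -> (`|x ord0 k| <= n * vertex_bound)%N.
Proof.
move=> [lam [lam_ge0 _ lam_sum xE]].
have /(congr1 (fun r : 'rV[rat]_d => r ord0 k)) := xE.
rewrite !mxE summxE /=; under eq_bigr => i _ do rewrite !mxE.
move=> xkE; rewrite -(ler_nat rat) natr_absz intr_norm xkE.
rewrite (le_trans (ler_norm_sum _ _ _)) // natrM -lam_sum mulr_suml.
apply: ler_sum => i _; rewrite normrM (ger0_norm (lam_ge0 i)) ler_wpM2l //.
rewrite -intr_norm -natr_absz ler_nat /vertex_bound (bigD1 i) //= (bigD1 k) //=.
by rewrite -addnA leq_addr.
Qed.

Lemma finite_in_dilate S n : finite_set [set x | in_dilate v S n x]%classic.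
Proof.
pose N := (n * vertex_bound)%N.
pose f (g : {ffun 'I_d -> 'I_(N.*2).+1}) := \row_k ((g k : nat)%:Z - N%:Z).
apply: (sub_finite_set (B := range f)); last exact: finite_image.
move=> x /= /in_dilate_bound xB.
exists [ffun k => inord (absz (x ord0 k + N%:Z))] => //.
apply/rowP => k; have := xB k; rewrite !mxE ffunE -/N.
move: (x ord0 k) => z; rewrite /= => zN; rewrite inordK; lia.
Qed.

Definition barycentric n y (lam : 'I_d.+1 -> rat) : Prop :=
  [/\ forall i, 0 <= lam i, \sum_i lam i = n%:R & ratv y = \sum_i lam i *: ratv (v i)].

Definition dilate n : set 'rV[int]_d := [set y | in_dilate v setT n y]%classic.

Lemma dilateP n y : dilate n y <-> exists lam, barycentric n y lam.
Proof.
split; first by move=> [lam [? _ ? ?]]; exists lam.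
by move=> [lam [? ? ?]]; exists lam; split => // i; rewrite in_setT.
Qed.

Definition bary n y : 'I_d.+1 -> rat :=
  match pselect (exists lam, barycentric n y lam) with
  | left ex_lam => proj1_sig (cid ex_lam)
  | right _ => fun=> 0
  end.

Lemma baryP n y : dilate n y -> barycentric n y (bary n y).
Proof. by move/dilateP; rewrite /bary; case: pselect => // ex_lam _; case: cid. Qed.

Definition bary_support n y := [set i | bary n y i != 0].
Definition bary_ge1 n y := [set i | 1 <= bary n y i].

Lemma bary_ge1_support n y : bary_ge1 n y \subset bary_support n y.
Proof. by apply/subsetP => i; rewrite !inE; apply: contraTneq => ->; rewrite ler10. Qed.

Definition dilate_ge1 n S I : set 'rV[int]_d := [set y | exists lam,
  [/\ barycentric n y lam, forall i, i \notin S -> lam i = 0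
     & forall i, i \in I -> 1 <= lam i]]%classic.

Lemma dilate_ge1_sub n S I : (dilate_ge1 n S I `<=` dilate n)%classic.
Proof. by move=> y [lam [y_lam _ _]]; apply/dilateP; exists lam. Qed.

Lemma dilate_ge1_card n S I y : dilate_ge1 n S I y -> (#|I| <= n)%N.
Proof.
move=> [lam [[lam_ge0 lam_sum _] _ lam_ge1]].
rewrite -(ler_nat rat) -lam_sum -sum1_card natr_sum [X in X <= _]big_mkcond /=.
by apply: ler_sum => i _; case: ifP => [/lam_ge1|_].
Qed.

Lemma dilate_ge1_translate n S I : I \subset S -> (#|I| <= n)%N ->
  (dilate_ge1 n S I
    = (+%R^~ (\sum_(i in I) v i)) @` [set x | in_dilate v S (n - #|I|) x])%classic.
Proof.
move=> IS In; set c := \sum_(i in I) v i.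
pose e i : rat := (i \in I)%:R.
have sum_e : \sum_i e i = #|I|%:R.
  rewrite -sum1_card natr_sum [RHS]big_mkcond.
  by apply: eq_bigr => i _; rewrite /e; case: (i \in I).
have sum_eZ : \sum_i e i *: ratv (v i) = ratv c.
  rewrite ratv_sum [RHS]big_mkcond /=; apply: eq_bigr => i _.
  by rewrite /e; case: (i \in I); rewrite ?scale1r ?scale0r.
have e0 i : i \notin S -> e i = 0.
  by move=> iS; rewrite /e (contraNF (subsetP IS i)).
apply/seteqP; split=> [y [lam [[lam_ge0 lam_sum yE] lamS lamI]] |
                       _ [x [lam [lam_ge0 lamS lam_sum xE]] <-]].
  exists (y - c); last by rewrite /= subrK.
  exists (lam \- e); split.
  - move=> i; rewrite /e /=.
    by case: (boolP (i \in I)) => [/lamI|_]; rewrite ?subr_ge0 ?subr0.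
  - by move=> i iS; rewrite /= lamS // e0 // subr0.
  - by rewrite sumrB lam_sum sum_e natrB.
  - under eq_bigr => i _ do rewrite /= scalerBl.
    by rewrite sumrB sum_eZ ratvD ratvN yE.
exists (lam \+ e); split; first split.
- by move=> i; apply: addr_ge0.
- by rewrite big_split /= lam_sum sum_e -natrD subnK.
- under eq_bigr => i _ do rewrite /= scalerDl.
  by rewrite big_split /= sum_eZ ratvD xE.
- by move=> i iS; rewrite /= lamS // e0 // addr0.
- by move=> i iI; rewrite /= /e iI lerDr.
Qed.

Lemma ehr_translate n S I : I \subset S -> (#|I| <= n)%N ->
  ehr v S (n - #|I|) = #|` fset_set (dilate_ge1 n S I)|.
Proof.
move=> IS In; rewrite dilate_ge1_translate // /ehr.
rewrite fset_set_image; last exact: finite_in_dilate.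
by apply/esym/eqP/card_in_imfsetP => x y _ _; apply: addIr.
Qed.

Lemma dilate_ge1_set0 n y : dilate_ge1 n set0 set0 y <-> n = 0%N /\ y = 0.
Proof.
split=> [[lam [[_ lam_sum yE] lam0 _]] | [-> ->]].
  have {}lam0 i : lam i = 0 by rewrite lam0 ?inE.
  rewrite big1 // in lam_sum; rewrite big1 in yE => [|i _]; last by rewrite lam0 scale0r.
  split; first by apply/eqP; rewrite -(eqr_nat rat) -lam_sum.
  by apply: ratv_inj; rewrite yE ratv0.
exists (fun=> 0); split=> //; first split=> //.
- by rewrite big1.
- by rewrite ratv0 big1 // => i _; rewrite scale0r.
- by move=> i; rewrite inE.
Qed.

Lemma card_dilate_ge1_set0 n :
  #|` fset_set (dilate_ge1 n set0 set0)| = (n == 0%N).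
Proof.
case: n => [|n]; last first.
  by apply: card_fset_set_eq0 => y /dilate_ge1_set0 [].
rewrite (_ : dilate_ge1 0 set0 set0 = [set 0]%classic) ?fset_set1 ?cardfs1 //.
by apply/seteqP; split=> y /=; rewrite dilate_ge1_set0 //; case.
Qed.

Lemma hstar_incl_excl S n : hstar v S n = \sum_(I : {set 'I_d.+1} | I \subset S)
  (-1) ^+ #|I| * (#|` fset_set (dilate_ge1 n S I)|)%:R.
Proof.
have [-> | S_neq0] := eqVneq S set0.
  rewrite /hstar cards0 eqxx (big_pred1 set0) => [|I]; last by rewrite subset0.
  by rewrite cards0 mul1r card_dilate_ge1_set0.
rewrite (bigID (fun I => #|I| <= n)%N) /=.
rewrite [X in _ = _ + X]big1 ?addr0 => [|I /andP[_ In]].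
  rewrite /hstar cards_eq0 (negbTE S_neq0).
  rewrite (eq_bigr (fun I => (-1) ^+ #|I| * (ehr v S (n - #|I|))%:R)) => [|I /andP[IS In]].
    rewrite (sum_subsets_by_card S n (fun i => (-1) ^+ i * (ehr v S (n - i))%:R)).
    by apply: eq_bigr => i _; rewrite mulrAC -[RHS]mulr_natr.
  by rewrite -(ehr_translate IS In).
rewrite card_fset_set_eq0 ?mulr0 // => y /dilate_ge1_card.
by rewrite (negbTE In).
Qed.

Lemma count_int_Pi_Negz k : count_int_Pi v (Negz k) = 0%N.
Proof.
apply: card_fset_set_eq0 => y [lam [lam01 _ lam_sum]].
have : 0 <= \sum_i lam i by apply: sumr_ge0 => i _; case/andP: (lam01 i) => /ltW.
by rewrite -lam_sum NegzE intrN oppr_ge0 leNgt ltr0Sn.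
Qed.

Lemma Stilde_hstar n :
  Stilde v n = \sum_(S : {set 'I_d.+1}) (-1) ^+ (d.+1 - #|S|) * hstar v S n.
Proof.
apply: eq_bigr => S _; congr (_ * _).
rewrite /gpoly gpoly_fuel_eq1 ?subsetT // big_ord_recr /= subnn coef1 eqxx mulr1.
by rewrite big1 ?add0r // => i _; rewrite coef1 subn_eq0 leqNgt ltn_ord mulr0.
Qed.

Hypothesis v_indep : affinely_independent v.

Lemma barycentric_uniq n y lam lam' :
  barycentric n y lam -> barycentric n y lam' -> lam =1 lam'.
Proof.
move=> [_ lam_sum yE] [_ lam'_sum yE'].
have := @v_indep (lam \- lam'); rewrite sumrB lam_sum lam'_sum subrr => /(_ erefl).
under eq_bigr => i _ do rewrite /= scalerBl.
by rewrite sumrB -yE -yE' subrr => /(_ erefl) eq0 i; exact/subr0_eq/eq0.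
Qed.

Lemma bary_uniq n y lam : barycentric n y lam -> bary n y =1 lam.
Proof.
move=> y_lam; have y_dil : dilate n y by apply/dilateP; exists lam.
exact: barycentric_uniq (baryP y_dil) y_lam.
Qed.

Lemma dilate_ge1E n S I y : dilate n y ->
  dilate_ge1 n S I y <-> (bary_support n y \subset S) && (I \subset bary_ge1 n y).
Proof.
move=> /baryP y_bary; split=> [[lam [y_lam lamS lamI]] | /andP[suppS IG]].
  have lamE := bary_uniq y_lam.
  apply/andP; split; apply/subsetP => i; rewrite !inE lamE; last exact: lamI.
  by apply: contraR => /lamS ->.
exists (bary n y); split=> // i; last by move/(subsetP IG); rewrite inE.
move=> iS; apply/eqP; apply: contraR iS => i_supp.
by apply: (subsetP suppS); rewrite inE.
Qed.

Lemma mem_fset_set_dilate n y : y \in fset_set (dilate n) -> dilate n y.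
Proof. by rewrite in_fset_set => [/set_mem|]; last exact: finite_in_dilate. Qed.

Lemma hstar_bary S n : hstar v S n = \sum_(y <- fset_set (dilate n))
  ((bary_support n y \subset S) && (bary_ge1 n y == set0))%:R.
Proof.
rewrite hstar_incl_excl.
under eq_bigr => I _.
  rewrite (card_fset_set_sum (finite_in_dilate _ n) (@dilate_ge1_sub n S I)).
  rewrite natr_sum mulr_sumr.
  over.
rewrite exchange_big /= big_seq [RHS]big_seq.
apply: eq_bigr => y /mem_fset_set_dilate y_dil.
under eq_bigr => I _ do rewrite (asbool_equiv_eq (dilate_ge1E S I y_dil)) asboolb.
case suppS: (bary_support n y \subset S) => /=; last first.
  by rewrite big1 // => I _; rewrite mulr0.
rewrite -(sum_subset_sign int).
rewrite (eq_bigr (fun I => if I \subset bary_ge1 n y then (-1) ^+ #|I| else 0)).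
  rewrite -big_mkcondr; apply: eq_bigl => I; apply/andP/idP => [[] // | IG]; split=> //.
  exact: subset_trans IG (subset_trans (bary_ge1_support n y) suppS).
by move=> I _; case: (I \subset bary_ge1 n y); rewrite ?mulr1 ?mulr0.
Qed.

Lemma Stilde_bary n : Stilde v n = \sum_(y <- fset_set (dilate n))
  ((bary_support n y == setT) && (bary_ge1 n y == set0))%:R.
Proof.
rewrite Stilde_hstar; under eq_bigr => S _ do rewrite hstar_bary mulr_sumr.
rewrite exchange_big /=; apply: eq_bigr => y _.
case: (bary_ge1 n y == set0); last by rewrite andbF big1 // => S _; rewrite andbF mulr0.
rewrite andbT -(sum_supset_sign int) card_ord; apply: eq_bigr => S _.
by rewrite andbT.
Qed.

Lemma count_int_Pi_bary n : count_int_Pi v n = (\sum_(y <- fset_set (dilate n))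
  ((bary_support n y == setT) && (bary_ge1 n y == set0)))%N.
Proof.
have int_dilate : ([set y | in_int_Pi v y n] `<=` dilate n)%classic.
  move=> y [lam [lam01 yE lam_sum]]; apply/dilateP; exists lam; split=> // i.
  by case/andP: (lam01 i) => /ltW.
rewrite /count_int_Pi (card_fset_set_sum (finite_in_dilate _ n) int_dilate).
rewrite big_seq [RHS]big_seq; apply: eq_bigr => y /mem_fset_set_dilate /baryP y_bary.
congr nat_of_bool; apply/asboolP/idP =>
  [[lam [lam01 yE lam_sum]] | /andP[/eqP suppT /eqP ge1_0]].
  have /bary_uniq lamE : barycentric n y lam.
    by split=> // i; case/andP: (lam01 i) => /ltW.
  apply/andP; split; apply/eqP/setP => i; rewrite !inE lamE; case/andP: (lam01 i).
    by move=> /lt0r_neq0.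
  by move=> _; rewrite leNgt => ->.
case: y_bary => bary_ge0 bary_sum yE; exists (bary n y); split=> // i.
have : i \in bary_support n y by rewrite suppT inE.
have : i \notin bary_ge1 n y by rewrite ge1_0 inE.
by rewrite !inE -ltNge => lt1 neq0; rewrite lt1 lt_def neq0 bary_ge0.
Qed.

End Simplex.

Theorem proposition4p6 (d : nat) (v : 'I_d.+1 -> 'rV[int]_d) :
  affinely_independent v ->
  (forall m : int, StildeZ v m = (count_int_Pi v m)%:R) /\
  (forall n : nat, Stilde v n != 0 ->
     exists2 k : nat, (n <= k)%N & hstar v [set: 'I_d.+1]%SET k != 0).
Proof.
move=> v_indep; split=> [[n|k] | n].
- by rewrite /StildeZ Stilde_bary // count_int_Pi_bary // natr_sum.
- by rewrite /StildeZ count_int_Pi_Negz.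
move=> Stilde_neq0; exists n => //; move: Stilde_neq0.
rewrite Stilde_bary // hstar_bary // -!natr_sum !pnatr_eq0 -!lt0n.
move=> /leq_trans; apply; apply: leq_sum => y _.
by rewrite subsetT; case: (_ == _); case: (_ == _).
Qed.
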